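(* Let $d$ be a separated metric on a compact Hausdorff space $X$. Then the topology symmetrically induced by $d$ coincides with the topology of $X$ if and only if $d\colon X\times X\to[0,\infty]$ is continuous with respect to the lower topology on $[0,\infty]$. Moreover, if $(X,d)$ is a separated metric compact Hausdorff space and $d$ does not attain the value $\infty$, this condition is equivalent to continuity of $d\colon X\times X\to[0,\infty[$ with respect to the Euclidean topology on $[0,\infty[$.
   Context: A metric on a set $X$ is a map $d\colon X\times X\to[0,\infty]$ with $d(x,x)=0$ and $d(x,z)\le d(x,y)+d(y,z)$ (not necessarily symmetric, $\infty$ allowed); separated means $d(x,y)=0=d(y,x)$ implies $x=y$. The topology symmetrically induced by $d$ is the topology generated by the sets $\{x\mid d(x_0,x)<u\}$ and $\{x\mid d(x,x_0)<u\}$ for $x_0\in X$, $u\in[0,\infty]$. The lower topology on $[0,\infty]$ is generated by the sets $[0,u[$, and the upper topology by the sets $]u,\infty]$ ($u\in[0,\infty]$). A separated metric compact Hausdorff space is a compact Hausdorff space $X$ with a separated metric $d$ continuous as a map $X\times X\to[0,\infty]$ for the upper topology. *)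

(* [0,oo] is modelled as the nonnegative part of \bar R. *)
From HB Require Import structures.
From mathcomp Require Import all_boot all_order all_algebra.
From mathcomp Require Import all_classical all_reals all_analysis.
Set Implicit Arguments. Unset Strict Implicit. Unset Printing Implicit Defensive.
Import Order.TTheory GRing.Theory Num.Theory.
Local Open Scope classical_set_scope.
Local Open Scope ring_scope.
Local Open Scope ereal_scope.

Section Defs.
Context {R : realType} {X : topologicalType}.
Implicit Types d : X -> X -> \bar R.

(* d is a metric with values in [0,oo] (not necessarily symmetric) *)
Definition is_metric d : Prop :=
  (forall x y, 0 <= d x y) /\ (forall x, d x x = 0) /\
  (forall x y z, d x z <= d x y + d y z).

Definition separated_metric d : Prop :=
  forall x y, d x y = 0 -> d y x = 0 -> x = y.

Definition sym_subbasic d (A : set X) : Prop :=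
  exists x0 (u : \bar R), 0 <= u /\
    (A = [set x | d x0 x < u] \/ A = [set x | d x x0 < u]).

(* open sets of the topology generated by that subbasis:
   unions of finite intersections of subbasic sets *)
Definition sym_open d (A : set X) : Prop :=
  forall x, A x -> exists (n : nat) (B : 'I_n -> set X),
    (forall i, sym_subbasic d (B i)) /\ (forall i, B i x) /\
    (forall y, (forall i, B i y) -> A y).

Definition sym_topology_coincides d : Prop :=
  forall A : set X, sym_open d A <-> open A.

(* continuity of d : X * X -> [0,oo] for the lower topology, generated by
   the sets [0,u[ : preimages of all [0,u[ are open *)
Definition lower_continuous d : Prop :=
  forall u : \bar R, 0 <= u -> open [set p : X * X | d p.1 p.2 < u].

(* continuity for the upper topology, generated by the sets ]u,oo] *)
Definition upper_continuous d : Prop :=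
  forall u : \bar R, 0 <= u -> open [set p : X * X | u < d p.1 p.2].

End Defs.

From HB Require Import structures.
From mathcomp Require Import all_boot all_order all_algebra.
From mathcomp Require Import all_classical all_reals all_analysis.
From mathcomp Require Import lra.
Import Order.TTheory GRing.Theory Num.Theory.
Local Open Scope classical_set_scope.
Local Open Scope ring_scope.
Local Open Scope ereal_scope.

(* Lower continuity of d says that the sets {d < u} are open in X * X; their
   sections are the subbasic sets of the symmetric topology, which is therefore
   coarser than that of X.  Conversely, if all d-balls are open, the triangle
   inequality d z w <= d z a + d a b + d b w shows that {d < u} is open.  For
   the other inclusion of topologies, separation of d lets every a outside an
   open set A be separated from a given x in A by a subbasic set around x and a
   neighbourhood of a; compactness of the complement of A then shows that
   finitely many of these subbasic sets suffice.  For finite d, continuity into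
   [0,oo[ amounts to openness of both {d < u} and {u < d}. *)

Lemma open_sectionl (T U : topologicalType) (W : set (T * U)) (b : U) :
  open W -> open [set a | W (a, b)].
Proof.
move=> oW; apply: (@open_comp _ _ (fun a => (a, b))) => // a _.
by apply: cvg_pair; [exact: cvg_id | exact: cvg_cst].
Qed.

Lemma open_sectionr (T U : topologicalType) (W : set (T * U)) (a : T) :
  open W -> open [set b | W (a, b)].
Proof.
move=> oW; apply: (@open_comp _ _ (fun b => (a, b))) => // b _.
by apply: cvg_pair; [exact: cvg_cst | exact: cvg_id].
Qed.

Lemma ereal_gap {R : realType} {a u : \bar R} : 0 <= a -> a < u ->
  exists2 e : R, (0 < e)%R & a + e%:E + e%:E < u.
Proof.
case: a => [r| |] //= r0; case: u => [s| |] //=.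
- rewrite lte_fin => rs; exists ((s - r) / 3)%R.
    by apply: divr_gt0; rewrite ?subr_gt0.
  by rewrite -!EFinD lte_fin; lra.
- by move=> _; exists 1%R; rewrite // -!EFinD ltry.
Qed.

Section symmetric_topology.
Context {R : realType} {X : topologicalType} (d : X -> X -> \bar R).

Lemma sym_subbasic_open (A : set X) :
  lower_continuous d -> sym_subbasic d A -> open A.
Proof.
move=> dlc [x0 [u [u0 [->|->]]]].
- exact: open_sectionr (dlc u u0).
- exact: open_sectionl (dlc u u0).
Qed.

Lemma sym_open_open (A : set X) : lower_continuous d -> sym_open d A -> open A.
Proof.
move=> dlc Aopen; rewrite openE => x Ax.
have [n [B [Bsub [Bx BA]]]] := Aopen x Ax.
apply: (filterS BA); apply: filter_forall => i.
apply: open_nbhs_nbhs; split; last exact: Bx.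
exact: sym_subbasic_open dlc (Bsub i).
Qed.

Lemma sym_subbasic_sym_open (A : set X) : sym_subbasic d A -> sym_open d A.
Proof.
move=> sA x Ax; exists 1%N, (fun _ => A).
by split => //; split => // y; apply; exact: ord0.
Qed.

Hypothesis dm : is_metric d.
Let d_ge0 x y : 0 <= d x y := dm.1 x y.
Let d_refl x : d x x = 0 := dm.2.1 x.
Let d_triangle x y z : d x z <= d x y + d y z := dm.2.2 x y z.

Lemma sym_balls_nbhs (c : X) {e : R} : (0 < e)%R ->
  (forall A, sym_subbasic d A -> open A) ->
  nbhs c [set z | d c z < e%:E] /\ nbhs c [set z | d z c < e%:E].
Proof.
move=> e0 subbasic_open; have e0' : 0 <= e%:E by rewrite lee_fin ltW.
by split; apply: open_nbhs_nbhs; (split; last by rewrite /= d_refl lte_fin);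
  apply: subbasic_open; exists c, e%:E; split => //; [left|right].
Qed.

Lemma subbasic_open_lower_continuous :
  (forall A, sym_subbasic d A -> open A) -> lower_continuous d.
Proof.
move=> subbasic_open u u0; rewrite openE => -[a b] /= abu.
have [e e0 abe] := ereal_gap (d_ge0 a b) abu.
have ab_fin : d a b \is a fin_num.
  by rewrite ge0_fin_numE // (lt_le_trans abu) // leey.
exists ([set z | d z a < e%:E], [set w | d b w < e%:E]).
  by split => /=; [exact: (sym_balls_nbhs a e0 subbasic_open).2
            | exact: (sym_balls_nbhs b e0 subbasic_open).1].
move=> [z w] /= [za bw]; apply: le_lt_trans (lt_trans _ abe).
  exact: le_trans (d_triangle z a w) (leeD2l _ (d_triangle a b w)).
by rewrite -addeA addeCA; apply: lteD za _; rewrite lteD2lE.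
Qed.

Lemma ball_separation {y w : X} : 0 < d y w ->
  exists2 e : R, (0 < e)%R & forall z, d y z < e%:E -> d z w < e%:E -> False.
Proof.
move=> yw; have [e e0 ew] := ereal_gap (lexx 0) yw; rewrite add0e in ew.
exists e => // z yz zw.
have := lt_trans (lteD yz zw) ew.
by rewrite ltNge (d_triangle y z w).
Qed.

Lemma sym_separation {x a : X} : lower_continuous d -> separated_metric d ->
  x <> a -> exists2 U, sym_subbasic d U /\ U x &
    exists2 V, nbhs a V & forall z, U z -> V z -> False.
Proof.
move=> dlc dsep xa; have subbasic_open A := @sym_subbasic_open A dlc.
have [xa_gt0|] := boolP (0 < d x a).
  have [e e0 sep] := ball_separation xa_gt0.
  exists [set z | d x z < e%:E].
    split; last by rewrite /= d_refl lte_fin.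
    by exists x, e%:E; split; [rewrite lee_fin ltW | left].
  by exists [set z | d z a < e%:E]; first exact: (sym_balls_nbhs a e0 _).2.
rewrite -leNgt => xa_le0; have [ax_gt0|] := boolP (0 < d a x).
  have [e e0 sep] := ball_separation ax_gt0.
  exists [set z | d z x < e%:E].
    split; last by rewrite /= d_refl lte_fin.
    by exists x, e%:E; split; [rewrite lee_fin ltW | right].
  exists [set z | d a z < e%:E]; first exact: (sym_balls_nbhs a e0 _).1.
  by move=> z zx az; exact: sep az zx.
rewrite -leNgt => ax_le0; case: xa.
by apply: dsep; apply/eqP; rewrite eq_le ?d_ge0 ?andbT.
Qed.

Definition sym_basic (x : X) (G : set X) := exists n (B : 'I_n -> set X),
  (forall i, sym_subbasic d (B i)) /\ (forall i, B i x) /\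
  G = [set y | forall i, B i y].

Lemma sym_basicI (x : X) (G1 G2 : set X) :
  sym_basic x G1 -> sym_basic x G2 -> sym_basic x (G1 `&` G2).
Proof.
move=> [n [B1 [B1sub [B1x ->]]]] [m [B2 [B2sub [B2x ->]]]].
pose B k := match fintype.split k with inl i => B1 i | inr j => B2 j end.
exists (n + m)%N, B; split; first by move=> k; rewrite /B; case: fintype.split.
split; first by move=> k; rewrite /B; case: fintype.split.
apply/seteqP; split => y /=.
  by move=> [B1y B2y] k; rewrite /B; case: fintype.split.
move=> By; split => i.
- by have := By (lshift m i); rewrite /B (unsplitK (inl i)).
- by have := By (rshift n i); rewrite /B (unsplitK (inr i)).
Qed.

Lemma sym_basic_filter (x : X) : Filter (filter_from (sym_basic x) id).
Proof.
apply: filter_from_filter.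
  exists setT, 0%N, (fun _ => setT); split; first by case.
  by split; [case | rewrite predeqE => y; split => // _ []].
by move=> G1 G2 G1x G2x; exists (G1 `&` G2) => //; exact: sym_basicI.
Qed.

Lemma open_sym_open (A : set X) : compact [set: X] -> lower_continuous d ->
  separated_metric d -> open A -> sym_open d A.
Proof.
move=> cX dlc dsep oA x Ax.
(* Near-covering compactness of ~` A, indexed by the filter of basic
   neighbourhoods of x and the relation u <> a, yields a basic neighbourhood of
   x disjoint from ~` A. *)
have cAc : compact (~` A) := subclosed_compact (open_closedC oA) cX (subsetT _).
have := (compact_near_coveringP (~` A)).1 cAc X (filter_from (sym_basic x) id)
  (fun u a => u <> a) (sym_basic_filter x).
case=> [a Aca|G [n [B [Bsub [Bx ->]]]] GAc]; last first.
  by exists n, B; split => //; split => // y By; apply: contrapT => /(GAc y By).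
have xa : x <> a by move=> xa; apply: Aca; rewrite -xa.
have [U [Usub Ux] [V Va UV]] := sym_separation dlc dsep xa.
exists (V, U) => /=; first split => //.
  exists U => //; exists 1%N, (fun _ => U); split => //; split => //.
  by rewrite predeqE => y; split => [Uy _|]; [|apply; exact: ord0].
by move=> [z u] /= [Vz Uu] uz; subst; exact: UV Uu Vz.
Qed.

End symmetric_topology.

Section fine_continuity.
Context {R : realType} {T : topologicalType} (f : T -> \bar R).
Hypothesis f_fin : forall t, f t \is a fin_num.
Let f_fineK t : (fine (f t))%:E = f t := fineK (f_fin t).

Lemma fine_continuous_lower_upper : (forall t, 0 <= f t) ->
  (forall u, 0 <= u -> open [set t | f t < u]) ->
  (forall u, 0 <= u -> open [set t | u < f t]) ->
  continuous (fun t => fine (f t) : R^o).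
Proof.
move=> f_ge0 f_lower f_upper t; apply/cvgrPdist_lt => eps eps0 /=.
set r := fine (f t); have r_ge0 : (0 <= r)%R by rewrite fine_ge0.
have below : \forall s \near t, (fine (f s) < r + eps)%R.
  apply: filterS (_ : nbhs t [set s | f s < (r + eps)%:E]).
    by move=> s /=; rewrite -f_fineK lte_fin.
  apply: open_nbhs_nbhs; split; first by apply: f_lower; rewrite lee_fin; lra.
  by rewrite /= -f_fineK lte_fin ltrDl.
have above : \forall s \near t, (r - eps < fine (f s))%R.
  have [r_eps_ge0|r_eps_lt0] := leP 0%R (r - eps)%R; last first.
    by apply: nearW => s; apply: lt_le_trans r_eps_lt0 _; rewrite fine_ge0.
  apply: filterS (_ : nbhs t [set s | (r - eps)%:E < f s]).
    by move=> s /=; rewrite -f_fineK lte_fin.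
  apply: open_nbhs_nbhs; split; first by apply: f_upper; rewrite lee_fin.
  by rewrite /= -f_fineK -/r lte_fin; lra.
apply: filterS2 below above => s below_s above_s.
by rewrite ltr_distl; apply/andP; split; lra.
Qed.

Lemma fine_continuous_lower : continuous (fun t => fine (f t) : R^o) ->
  forall u, open [set t | f t < u].
Proof.
move=> f_cont [s| |].
- have -> : [set t | f t < s%:E] =
      (fun t => fine (f t) : R^o) @^-1` [set x | (x < s)%R].
    by apply/seteqP; split => t /=; rewrite -f_fineK lte_fin.
  by apply: open_comp; [move=> t _; exact: f_cont | exact: open_lt].
- have -> : [set t | f t < +oo] = setT.
    by apply/seteqP; split => t //= _; rewrite ltey_eq f_fin.
  exact: openT.
- have -> : [set t | f t < -oo] = set0.
    by apply/seteqP; split => t //=; rewrite ltNge leNye.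
  exact: open0.
Qed.

End fine_continuity.

Theorem proposition2p10 (R : realType) (X : topologicalType)
  (d : X -> X -> \bar R) :
  compact [set: X] -> hausdorff_space X ->
  is_metric d -> separated_metric d ->
  (sym_topology_coincides d <-> lower_continuous d) /\
  (upper_continuous d -> (forall x y, d x y < +oo) ->
     (lower_continuous d <->
      continuous ((fun p : X * X => fine (d p.1 p.2)) : X * X -> R^o))).
Proof.
move=> cX _ dm dsep; split.
  split=> [coincide|dlc A].
    apply: subbasic_open_lower_continuous => // A.
    by move=> /sym_subbasic_sym_open/coincide.
  by split; [exact: sym_open_open | exact: open_sym_open].
move=> dup dfin; have d_ge0 p : 0 <= d p.1 p.2 := dm.1 p.1 p.2.
have d_fin p : d p.1 p.2 \is a fin_num by rewrite ge0_fin_numE // dfin.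
split=> [dlc|d_cont u _].
  exact: fine_continuous_lower_upper d_fin d_ge0 dlc dup.
exact: fine_continuous_lower d_fin d_cont u.
Qed.
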